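(* Let $\gamma(t,s)$ be a smooth solution of $\gamma_t=\gamma_s\times\gamma_{ss}$ in $\mathrm{Im}(\mathbb O)$ with $|\gamma_s|=1$, $k_1>0$, $\kappa_2>0$ everywhere, and suppose $\varphi_3=0$ and $\varphi_2\neq0$. Then the coefficients of the second fundamental form of the surface $\Sigma$ swept by $\gamma$ with respect to the frame $\tilde E_1,\dots,\tilde E_7$ satisfy $\tilde h^6_{ij}=\tilde h^7_{ij}=0$ for all $i,j\in\{1,2\}$; that is, the normal bundle of $\Sigma$ is flat in the directions $\tilde E_6,\tilde E_7$.
   Context: $\mathbb O$: octonions (product $(a+bl)(c+dl)=(ac-d\bar b)+(\bar a d+cb)l$ for quaternions), $\langle x,y\rangle=\frac12(\bar xy+\bar yx)$, $\mathrm{Im}(\mathbb O)\cong\mathbb R^7$, $x\times y=\frac12(\bar yx-\bar xy)$. For each $t$ (with $s$ in an interval containing $0$): $I_4=\gamma_s$, $k_1=\|\gamma_{ss}\|$, $I_1=I_{4s}/k_1$, $I_5=I_1\times I_4$, $\kappa_2=\sqrt{\|I_{1s}\|^2-\langle I_{1s},I_4\rangle^2-\langle I_{1s},I_5\rangle^2}$, $I_2=\kappa_2^{-1}(I_{1s}-\langle I_{1s},I_4\rangle I_4-\langle I_{1s},I_5\rangle I_5)$, $I_3=I_1\times I_2$, $I_6=I_2\times I_4$, $I_7=I_3\times I_4$; $\rho_1=\langle I_{1s},I_5\rangle$, $\rho_2=\langle I_{2s},I_6\rangle$, $\alpha=\langle I_{2s},I_3\rangle$, $\beta_1=\langle I_{2s},I_7\rangle$,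 $\beta_2=\langle I_{3s},I_6\rangle$; $r=\frac1{\sqrt2}e^{-\sqrt{-1}\int_0^s\rho_1}$, $q=\frac1{\sqrt2}e^{-\sqrt{-1}\int_0^s\rho_2}$; $\varphi_1=k_1\overline r$, $\varphi_2=2\kappa_2r\overline q$, $\varphi_3=-\sqrt2q^2r[2\alpha+\sqrt{-1}(\beta_1+\beta_2)]$. Frame of $\Sigma$: $E_1=\gamma_s=I_4$, $E_2=\gamma_t/k_1=-I_5$, $E_3=I_1$, $E_4=I_2$, $E_5=I_6$, $E_6=I_3$, $E_7=I_7$, coframe $\omega^1=ds$, $\omega^2=\sqrt2|\varphi_1|dt$; for an orthonormal frame $(F_i)$ with $F_1=E_1$, $F_2=E_2$, coefficients $h^\alpha_{ij}$ are defined by $dF_i=\sum_{k\le2}\omega_i^kF_k+\sum_{\alpha\ge3}\omega_i^\alpha F_\alpha$, $\omega_i^\alpha=\sum_jh^\alpha_{ij}\omega^j$. Let $h^\alpha_{ij}$ be these for $F=E$, set $\theta=\arccos\frac{h^4_{22}}{\sqrt{(h^4_{22})^2+\frac94|\varphi_2|^2}}$, $\tilde E_i=E_i$ for $i\neq4,7$, $\tilde E_4=\cos\theta E_4-\sin\theta E_7$, $\tilde E_7=\sin\theta E_4+\cos\theta E_7$, and let $\tilde h^\alpha_{ij}$ be the coefficients for $F=\tilde E$. *)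

From Stdlib Require Import Reals.
From Coquelicot Require Import Coquelicot.
Open Scope R_scope.

Record quat := Qt { q0 : R; q1 : R; q2 : R; q3 : R }.

Definition qadd (a b : quat) : quat :=
  Qt (q0 a + q0 b) (q1 a + q1 b) (q2 a + q2 b) (q3 a + q3 b).
Definition qopp (a : quat) : quat := Qt (- q0 a) (- q1 a) (- q2 a) (- q3 a).
Definition qsub (a b : quat) : quat := qadd a (qopp b).
Definition qscale (c : R) (a : quat) : quat :=
  Qt (c * q0 a) (c * q1 a) (c * q2 a) (c * q3 a).
Definition qconj (a : quat) : quat := Qt (q0 a) (- q1 a) (- q2 a) (- q3 a).
(* (a0 + a1 i + a2 j + a3 k)(b0 + b1 i + b2 j + b3 k), i^2=j^2=k^2=ijk=-1 *)
Definition qmul (a b : quat) : quat :=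
  Qt (q0 a * q0 b - q1 a * q1 b - q2 a * q2 b - q3 a * q3 b)
     (q0 a * q1 b + q1 a * q0 b + q2 a * q3 b - q3 a * q2 b)
     (q0 a * q2 b - q1 a * q3 b + q2 a * q0 b + q3 a * q1 b)
     (q0 a * q3 b + q1 a * q2 b - q2 a * q1 b + q3 a * q0 b).

(* ---------- Octonions a + b l, a b quaternions ---------- *)
Record oct := Oc { oa : quat; ob : quat }.

Definition oadd (x y : oct) : oct := Oc (qadd (oa x) (oa y)) (qadd (ob x) (ob y)).
Definition oopp (x : oct) : oct := Oc (qopp (oa x)) (qopp (ob x)).
Definition osub (x y : oct) : oct := oadd x (oopp y).
Definition oscale (c : R) (x : oct) : oct := Oc (qscale c (oa x)) (qscale c (ob x)).
(* (a + b l)(c + d l) = (a c - d conj(b)) + (conj(a) d + c b) l *)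
Definition omul (x y : oct) : oct :=
  Oc (qsub (qmul (oa x) (oa y)) (qmul (ob y) (qconj (ob x))))
     (qadd (qmul (qconj (oa x)) (ob y)) (qmul (oa y) (ob x))).
Definition oconj (x : oct) : oct := Oc (qconj (oa x)) (qopp (ob x)).
Definition ore (x : oct) : R := q0 (oa x).
Definition is_imag (x : oct) : Prop := ore x = 0.
(* <x,y> = 1/2 (conj(x) y + conj(y) x)  (a real octonion; we take its real part) *)
Definition oinner (x y : oct) : R :=
  ore (oscale (1/2) (oadd (omul (oconj x) y) (omul (oconj y) x))).
Definition onorm (x : oct) : R := sqrt (oinner x x).
Definition ocross (x y : oct) : oct :=
  oscale (1/2) (osub (omul (oconj y) x) (omul (oconj x) y)).

Definition ocomp (x : oct) (k : nat) : R :=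
  match k with
  | 0 => q0 (oa x) | 1 => q1 (oa x) | 2 => q2 (oa x) | 3 => q3 (oa x)
  | 4 => q0 (ob x) | 5 => q1 (ob x) | 6 => q2 (ob x) | _ => q3 (ob x)
  end.
Definition of_comps (f : nat -> R) : oct :=
  Oc (Qt (f 0%nat) (f 1%nat) (f 2%nat) (f 3%nat))
     (Qt (f 4%nat) (f 5%nat) (f 6%nat) (f 7%nat)).

Definition dS (g : R -> R -> oct) : R -> R -> oct :=
  fun t s => of_comps (fun k => Derive (fun u => ocomp (g t u) k) s).
Definition dT (g : R -> R -> oct) : R -> R -> oct :=
  fun t s => of_comps (fun k => Derive (fun u => ocomp (g u s) k) t).

Definition smooth_at (g : R -> R -> oct) (t s : R) : Prop :=
  forall (k n : nat), ex_diff_n (fun t' s' => ocomp (g t' s') k) n t s.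

Section Frame.
Variable gamma : R -> R -> oct.

Definition I4 : R -> R -> oct := dS gamma.
Definition k1 (t s : R) : R := onorm (dS (dS gamma) t s).
Definition I1 (t s : R) : oct := oscale (/ k1 t s) (dS I4 t s).
Definition I5 (t s : R) : oct := ocross (I1 t s) (I4 t s).
Definition kappa2 (t s : R) : R :=
  let v := dS I1 t s in
  sqrt (onorm v ^ 2 - oinner v (I4 t s) ^ 2 - oinner v (I5 t s) ^ 2).
Definition I2 (t s : R) : oct :=
  let v := dS I1 t s in
  oscale (/ kappa2 t s)
    (osub (osub v (oscale (oinner v (I4 t s)) (I4 t s)))
          (oscale (oinner v (I5 t s)) (I5 t s))).
Definition I3 (t s : R) : oct := ocross (I1 t s) (I2 t s).
Definition I6 (t s : R) : oct := ocross (I2 t s) (I4 t s).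
Definition I7 (t s : R) : oct := ocross (I3 t s) (I4 t s).

Definition rho1 (t s : R) : R := oinner (dS I1 t s) (I5 t s).
Definition rho2 (t s : R) : R := oinner (dS I2 t s) (I6 t s).
Definition alpha (t s : R) : R := oinner (dS I2 t s) (I3 t s).
Definition beta1 (t s : R) : R := oinner (dS I2 t s) (I7 t s).
Definition beta2 (t s : R) : R := oinner (dS I3 t s) (I6 t s).

Definition cexpmi (x : R) : C := (cos x, - sin x).
Definition rC (t s : R) : C :=
  Cmult (RtoC (/ sqrt 2)) (cexpmi (RInt (fun u => rho1 t u) 0 s)).
Definition qC (t s : R) : C :=
  Cmult (RtoC (/ sqrt 2)) (cexpmi (RInt (fun u => rho2 t u) 0 s)).

Definition phi1 (t s : R) : C := Cmult (RtoC (k1 t s)) (Cconj (rC t s)).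
Definition phi2 (t s : R) : C :=
  Cmult (RtoC (2 * kappa2 t s)) (Cmult (rC t s) (Cconj (qC t s))).
Definition phi3 (t s : R) : C :=
  Cmult (RtoC (- sqrt 2))
    (Cmult (Cmult (qC t s) (qC t s))
      (Cmult (rC t s) (2 * alpha t s, beta1 t s + beta2 t s))).

(* frame E_1..E_7 of Sigma (E_2 = gamma_t / k1 = - I_5) *)
Definition Eframe (i : nat) : R -> R -> oct :=
  match i with
  | 1 => I4
  | 2 => fun t s => oopp (I5 t s)
  | 3 => I1
  | 4 => I2
  | 5 => I6
  | 6 => I3
  | _ => I7
  end.

(* coefficients h^a_{ij} for an orthonormal frame F with F_1 = E_1, F_2 = E_2:
   omega^1 = ds, omega^2 = sqrt 2 |phi1| dt, and omega_i^a = <dF_i, F_a>,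
   so h^a_{i1} = <d_s F_i, F_a>, h^a_{i2} = <d_t F_i, F_a> / (sqrt 2 |phi1|). *)
Definition hcoef (F : nat -> R -> R -> oct) (a i j : nat) (t s : R) : R :=
  match j with
  | 1 => oinner (dS (F i) t s) (F a t s)
  | _ => oinner (dT (F i) t s) (F a t s) / (sqrt 2 * Cmod (phi1 t s))
  end.

Definition theta (t s : R) : R :=
  let h := hcoef Eframe 4 2 2 t s in
  acos (h / sqrt (h ^ 2 + 9 / 4 * Cmod (phi2 t s) ^ 2)).

Definition Etilde (i : nat) : R -> R -> oct :=
  match i with
  | 4 => fun t s => osub (oscale (cos (theta t s)) (Eframe 4 t s))
                         (oscale (sin (theta t s)) (Eframe 7 t s))
  | 7 => fun t s => oadd (oscale (sin (theta t s)) (Eframe 4 t s))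
                         (oscale (cos (theta t s)) (Eframe 7 t s))
  | _ => Eframe i
  end.

End Frame.

Definition in_rect (ta tb sa sb : Rbar) (t s : R) : Prop :=
  Rbar_lt ta (Finite t) /\ Rbar_lt (Finite t) tb /\
  Rbar_lt sa (Finite s) /\ Rbar_lt (Finite s) sb.

(* Along each curve [t = const] the vectors I1, ..., I7 form an orthonormal frame of Im(O)
   adapted to its G2 structure: I4 = gamma_s, I1 and I2 come from Gram-Schmidt on gamma_ss
   and gamma_sss, and the others are cross products, so the octonion multiplication table
   expresses the derivatives of the frame in the frame itself.  The t-derivatives are
   reduced to s-derivatives through gamma_t = gamma_s x gamma_ss and the symmetry of second
   derivatives.  One finds d_s E1 = k1 I1, while d_s E2 and d_t E1 lie in
   span(I1, I4, I5, I6), so their components on I2, I3, I7 vanish.  The component of d_t E2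
   on I3 is -kappa2 alpha and, since beta2 = k1 + beta1, its component on I7 is
   -kappa2 (2 k1 + beta1).  Now phi3 = 0 means alpha = 0 and beta1 + beta2 = 0, i.e.
   beta1 = -k1/2, so h^7_22 = -(3/2) kappa2 = -(3/2)|phi2|, and theta is exactly the rotation
   killing sin(theta) h^4_22 + cos(theta) h^7_22. *)

From Stdlib Require Import Reals Lra FunctionalExtensionality.
From Coquelicot Require Import Coquelicot.
Open Scope R_scope.

(** * Octonion algebra on Im(O) *)

Ltac unfold_oct :=
  lazy beta iota zeta delta [q0 q1 q2 q3 oa ob is_imag ore oinner onorm ocross
    osub oscale oadd omul oconj oopp qsub qadd qscale qconj qmul qopp] in *.

Ltac destruct_oct x := destruct x as [[? ? ? ?] [? ? ? ?]].

Lemma oct_eq a0 a1 a2 a3 a4 a5 a6 a7 b0 b1 b2 b3 b4 b5 b6 b7 :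
  a0 = b0 -> a1 = b1 -> a2 = b2 -> a3 = b3 -> a4 = b4 -> a5 = b5 -> a6 = b6 -> a7 = b7 ->
  Oc (Qt a0 a1 a2 a3) (Qt a4 a5 a6 a7) = Oc (Qt b0 b1 b2 b3) (Qt b4 b5 b6 b7).
Proof. intros; subst; reflexivity. Qed.

Ltac oct_field := unfold_oct; try apply oct_eq; field.

Lemma oinner_comm x y : oinner x y = oinner y x.
Proof. destruct_oct x; destruct_oct y; oct_field. Qed.
Lemma oinner_addl x y z : oinner (oadd x y) z = oinner x z + oinner y z.
Proof. destruct_oct x; destruct_oct y; destruct_oct z; oct_field. Qed.
Lemma oinner_addr x y z : oinner z (oadd x y) = oinner z x + oinner z y.
Proof. destruct_oct x; destruct_oct y; destruct_oct z; oct_field. Qed.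
Lemma oinner_subl x y z : oinner (osub x y) z = oinner x z - oinner y z.
Proof. destruct_oct x; destruct_oct y; destruct_oct z; oct_field. Qed.
Lemma oinner_subr x y z : oinner z (osub x y) = oinner z x - oinner z y.
Proof. destruct_oct x; destruct_oct y; destruct_oct z; oct_field. Qed.
Lemma oinner_scalel c x z : oinner (oscale c x) z = c * oinner x z.
Proof. destruct_oct x; destruct_oct z; oct_field. Qed.
Lemma oinner_scaler c x z : oinner z (oscale c x) = c * oinner z x.
Proof. destruct_oct x; destruct_oct z; oct_field. Qed.
Lemma oinner_oppl x z : oinner (oopp x) z = - oinner x z.
Proof. destruct_oct x; destruct_oct z; oct_field. Qed.
Lemma oinner_oppr x z : oinner z (oopp x) = - oinner z x.
Proof. destruct_oct x; destruct_oct z; oct_field. Qed.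
Lemma oinner_self_ge0 x : 0 <= oinner x x.
Proof. destruct_oct x; unfold_oct; nra. Qed.

Lemma ocross_addl x y z : ocross (oadd x y) z = oadd (ocross x z) (ocross y z).
Proof. destruct_oct x; destruct_oct y; destruct_oct z; oct_field. Qed.
Lemma ocross_addr x y z : ocross z (oadd x y) = oadd (ocross z x) (ocross z y).
Proof. destruct_oct x; destruct_oct y; destruct_oct z; oct_field. Qed.
Lemma ocross_scalel c x z : ocross (oscale c x) z = oscale c (ocross x z).
Proof. destruct_oct x; destruct_oct z; oct_field. Qed.
Lemma ocross_scaler c x z : ocross z (oscale c x) = oscale c (ocross z x).
Proof. destruct_oct x; destruct_oct z; oct_field. Qed.
Lemma ocross_oppl x z : ocross (oopp x) z = oopp (ocross x z).
Proof. destruct_oct x; destruct_oct z; oct_field. Qed.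
Lemma ocross_oppr x z : ocross z (oopp x) = oopp (ocross z x).
Proof. destruct_oct x; destruct_oct z; oct_field. Qed.
Lemma ocross_anticomm x y : ocross x y = oopp (ocross y x).
Proof. destruct_oct x; destruct_oct y; oct_field. Qed.
Lemma ocross_self x : ocross x x = oscale 0 x.
Proof. destruct_oct x; oct_field. Qed.

Lemma oscale_scale a b x : oscale a (oscale b x) = oscale (a * b) x.
Proof. destruct_oct x; oct_field. Qed.
Lemma oscale_1 x : oscale 1 x = x.
Proof. destruct_oct x; oct_field. Qed.

Lemma is_imag_ocross x y : is_imag (ocross x y).
Proof. destruct_oct x; destruct_oct y; oct_field. Qed.
Lemma is_imag_osub x y : is_imag x -> is_imag y -> is_imag (osub x y).
Proof. destruct_oct x; destruct_oct y; unfold_oct; intros; subst; field. Qed.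
Lemma is_imag_oscale c x : is_imag x -> is_imag (oscale c x).
Proof. destruct_oct x; unfold_oct; intros; subst; field. Qed.

(* Coordinates of Im(O) in the basis i, j, k, l, il, jl, kl. *)
Definition mkI (x1 x2 x3 x4 x5 x6 x7 : R) : oct := Oc (Qt 0 x1 x2 x3) (Qt x4 x5 x6 x7).

Lemma ocross_coords x1 x2 x3 x4 x5 x6 x7 y1 y2 y3 y4 y5 y6 y7 :
  ocross (mkI x1 x2 x3 x4 x5 x6 x7) (mkI y1 y2 y3 y4 y5 y6 y7) =
  mkI (x2*y3 - x3*y2 - x4*y5 + x5*y4 - x6*y7 + x7*y6)
      (- x1*y3 + x3*y1 - x4*y6 + x5*y7 + x6*y4 - x7*y5)
      (x1*y2 - x2*y1 - x4*y7 - x5*y6 + x6*y5 + x7*y4)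
      (x1*y5 + x2*y6 + x3*y7 - x5*y1 - x6*y2 - x7*y3)
      (- x1*y4 - x2*y7 + x3*y6 + x4*y1 - x6*y3 + x7*y2)
      (x1*y7 - x2*y4 - x3*y5 + x4*y2 + x5*y3 - x7*y1)
      (- x1*y6 + x2*y5 - x3*y4 + x4*y3 - x5*y2 + x6*y1).
Proof. unfold mkI; oct_field. Qed.

Lemma oinner_coords x1 x2 x3 x4 x5 x6 x7 y1 y2 y3 y4 y5 y6 y7 :
  oinner (mkI x1 x2 x3 x4 x5 x6 x7) (mkI y1 y2 y3 y4 y5 y6 y7) =
  x1*y1 + x2*y2 + x3*y3 + x4*y4 + x5*y5 + x6*y6 + x7*y7.
Proof. unfold mkI; oct_field. Qed.

Ltac destruct_imag x Hx :=
  destruct x as [[x0 ? ? ?] [? ? ? ?]];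
  unfold is_imag, ore in Hx; cbn [q0 oa] in Hx; subst x0;
  match goal with |- context [Oc (Qt 0 ?a1 ?a2 ?a3) (Qt ?a4 ?a5 ?a6 ?a7)] =>
    change (Oc (Qt 0 a1 a2 a3) (Qt a4 a5 a6 a7)) with (mkI a1 a2 a3 a4 a5 a6 a7) end.

Ltac imag_ring :=
  repeat rewrite ocross_coords; repeat rewrite oinner_coords;
  unfold mkI; unfold_oct; try apply oct_eq; ring.

Section ImagIdentities.
Variables x y z : oct.
Hypotheses (Hx : is_imag x) (Hy : is_imag y) (Hz : is_imag z).

Lemma oinner_ocross_l : oinner (ocross x y) x = 0.
Proof. destruct_imag x Hx; destruct_imag y Hy; imag_ring. Qed.

Lemma oinner_ocross_r : oinner (ocross x y) y = 0.
Proof. destruct_imag x Hx; destruct_imag y Hy; imag_ring. Qed.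

Lemma oinner_ocross_cycle : oinner (ocross x y) z = oinner (ocross y z) x.
Proof. destruct_imag x Hx; destruct_imag y Hy; destruct_imag z Hz; imag_ring. Qed.

Lemma ocross_ocross_same :
  ocross x (ocross x y) = osub (oscale (oinner x y) x) (oscale (oinner x x) y).
Proof. destruct_imag x Hx; destruct_imag y Hy; imag_ring. Qed.

Lemma oinner_ocross_ocross :
  oinner (ocross x y) (ocross x z) = oinner x x * oinner y z - oinner x y * oinner x z.
Proof. destruct_imag x Hx; destruct_imag y Hy; destruct_imag z Hz; imag_ring. Qed.

Lemma oinner_ocross_ocross_r :
  oinner (ocross y x) (ocross z x) = oinner x x * oinner y z - oinner x y * oinner x z.
Proof. destruct_imag x Hx; destruct_imag y Hy; destruct_imag z Hz; imag_ring. Qed.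

(* The polarised alternative law of O. *)
Lemma ocross_alternative :
  oadd (ocross x (ocross y z)) (ocross (ocross x y) z) =
  osub (oscale (2 * oinner x z) y) (oadd (oscale (oinner x y) z) (oscale (oinner y z) x)).
Proof. destruct_imag x Hx; destruct_imag y Hy; destruct_imag z Hz; imag_ring. Qed.

End ImagIdentities.

(** * G2-adapted frames *)

Record orthonormal_frame (i1 i2 i3 i4 i5 i6 i7 : oct) : Prop := {
  im1 : is_imag i1; im2 : is_imag i2; im3 : is_imag i3; im4 : is_imag i4;
  im5 : is_imag i5; im6 : is_imag i6; im7 : is_imag i7;
  n11 : oinner i1 i1 = 1; n22 : oinner i2 i2 = 1; n33 : oinner i3 i3 = 1;
  n44 : oinner i4 i4 = 1; n55 : oinner i5 i5 = 1; n66 : oinner i6 i6 = 1;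
  n77 : oinner i7 i7 = 1;
  n12 : oinner i1 i2 = 0; n13 : oinner i1 i3 = 0; n14 : oinner i1 i4 = 0;
  n15 : oinner i1 i5 = 0; n16 : oinner i1 i6 = 0; n17 : oinner i1 i7 = 0;
  n23 : oinner i2 i3 = 0; n24 : oinner i2 i4 = 0; n25 : oinner i2 i5 = 0;
  n26 : oinner i2 i6 = 0; n27 : oinner i2 i7 = 0;
  n34 : oinner i3 i4 = 0; n35 : oinner i3 i5 = 0; n36 : oinner i3 i6 = 0;
  n37 : oinner i3 i7 = 0;
  n45 : oinner i4 i5 = 0; n46 : oinner i4 i6 = 0; n47 : oinner i4 i7 = 0;
  n56 : oinner i5 i6 = 0; n57 : oinner i5 i7 = 0;
  n67 : oinner i6 i7 = 0 }.

Record g2_frame (i1 i2 i3 i4 i5 i6 i7 : oct) : Prop := {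
  g2_orthonormal : orthonormal_frame i1 i2 i3 i4 i5 i6 i7;
  c14 : ocross i1 i4 = i5; c12 : ocross i1 i2 = i3; c24 : ocross i2 i4 = i6;
  c34 : ocross i3 i4 = i7; c45 : ocross i4 i5 = i1; c51 : ocross i5 i1 = i4;
  c61 : ocross i6 i1 = i7;
  p526 : oinner (ocross i5 i2) i6 = 0 }.

Section AdaptedFrame.
Variables i1 i2 i4 : oct.
Hypotheses (Hi1 : is_imag i1) (Hi2 : is_imag i2) (Hi4 : is_imag i4)
  (N11 : oinner i1 i1 = 1) (N22 : oinner i2 i2 = 1) (N44 : oinner i4 i4 = 1)
  (N12 : oinner i1 i2 = 0) (N14 : oinner i1 i4 = 0) (N24 : oinner i2 i4 = 0)
  (N25 : oinner i2 (ocross i1 i4) = 0).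

Lemma orthonormal_frame_of_triple :
  orthonormal_frame i1 i2 (ocross i1 i2) i4 (ocross i1 i4) (ocross i2 i4)
    (ocross (ocross i1 i2) i4).
Proof.
  pose proof (is_imag_ocross i1 i2) as Hi3.
  assert (N16 : oinner i1 (ocross i2 i4) = 0).
  { rewrite oinner_comm, oinner_ocross_cycle, ocross_anticomm, oinner_oppl, oinner_comm, N25
      by auto.
    ring. }
  assert (N34 : oinner (ocross i1 i2) i4 = 0)
    by (rewrite oinner_ocross_cycle, oinner_comm by auto; exact N16).
  assert (N13 : oinner i1 (ocross i1 i2) = 0)
    by (rewrite oinner_comm; apply oinner_ocross_l; auto).
  assert (N35 : oinner (ocross i1 i2) (ocross i1 i4) = 0)
    by (rewrite oinner_ocross_ocross, N12, N14, N24 by auto; ring).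
  assert (N36 : oinner (ocross i1 i2) (ocross i2 i4) = 0).
  { rewrite (ocross_anticomm i1 i2), oinner_oppl, oinner_ocross_ocross, N14,
      (oinner_comm i2 i1), N12 by auto.
    ring. }
  assert (N23 : oinner i2 (ocross i1 i2) = 0)
    by (rewrite oinner_comm; apply oinner_ocross_r; auto).
  constructor; auto; try apply is_imag_ocross;
    try solve [rewrite oinner_comm; apply oinner_ocross_l; auto
              | rewrite oinner_comm; apply oinner_ocross_r; auto].
  - rewrite oinner_ocross_ocross, N11, N22, N12 by auto; ring.
  - rewrite oinner_ocross_ocross, N11, N44, N14 by auto; ring.
  - rewrite oinner_ocross_ocross_r, N44, N22, (oinner_comm i4 i2), N24 by auto; ring.
  - rewrite oinner_ocross_ocross_r, N44, oinner_ocross_ocross, N11, N22, N12,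
      (oinner_comm i4), N34 by auto; ring.
  - rewrite oinner_comm, oinner_ocross_cycle, ocross_anticomm, oinner_oppl, oinner_comm, N35
      by auto.
    ring.
  - rewrite oinner_comm, oinner_ocross_cycle, ocross_anticomm, oinner_oppl, oinner_comm, N36
      by auto.
    ring.
  - rewrite oinner_ocross_ocross_r, (oinner_comm i4 i1), N14, N12 by auto; ring.
  - rewrite oinner_ocross_ocross_r, (oinner_comm i4 i1), N14, N13,
      (oinner_comm i4 (ocross i1 i2)), N34 by auto.
    ring.
  - rewrite oinner_ocross_ocross_r, (oinner_comm i4 i2), N24, N23,
      (oinner_comm i4 (ocross i1 i2)), N34 by auto.
    ring.
Qed.

Lemma g2_frame_of_triple :
  g2_frame i1 i2 (ocross i1 i2) i4 (ocross i1 i4) (ocross i2 i4) (ocross (ocross i1 i2) i4).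
Proof.
  constructor; try reflexivity.
  - exact orthonormal_frame_of_triple.
  - rewrite (ocross_anticomm i1 i4), ocross_oppr, ocross_ocross_same, (oinner_comm i4 i1),
      N14, N44 by auto.
    destruct_oct i1; destruct_oct i4; oct_field.
  - rewrite ocross_anticomm, ocross_ocross_same, N14, N11 by auto.
    destruct_oct i1; destruct_oct i4; oct_field.
  - pose proof (ocross_alternative i1 i2 i4 Hi1 Hi2 Hi4) as Halt.
    rewrite N14, N12, N24 in Halt.
    rewrite ocross_anticomm.
    revert Halt; generalize (ocross i1 (ocross i2 i4)) (ocross (ocross i1 i2) i4).
    intros X Y Halt; destruct_oct X; destruct_oct Y; destruct_oct i1; destruct_oct i2;
      destruct_oct i4; unfold_oct; injection Halt; intros; apply oct_eq; lra.
  - rewrite oinner_ocross_cycle, ocross_ocross_same, oinner_subl, !oinner_scalel, N24, N22,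
      (oinner_comm i4), oinner_ocross_r by (auto; apply is_imag_ocross).
    ring.
Qed.

End AdaptedFrame.

Definition orth_residual (v a b : oct) : oct :=
  osub (osub v (oscale (oinner v a) a)) (oscale (oinner v b) b).

Lemma orth_residual_decomp (v a b : oct) (k : R) : k <> 0 ->
  v = oadd (oscale (oinner v a) a)
        (oadd (oscale (oinner v b) b) (oscale k (oscale (/ k) (orth_residual v a b)))).
Proof.
  intros Hk; unfold orth_residual; destruct_oct v; destruct_oct a; destruct_oct b.
  oct_field; exact Hk.
Qed.

Lemma unit_orth_residual (i1 i4 v : oct) (kap : R) :
  is_imag i1 -> is_imag i4 -> is_imag v ->
  oinner i1 i1 = 1 -> oinner i4 i4 = 1 -> oinner i1 i4 = 0 -> oinner v i1 = 0 ->
  0 < kap -> kap ^ 2 = oinner v v - oinner v i4 ^ 2 - oinner v (ocross i1 i4) ^ 2 ->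
  let n := oscale (/ kap) (orth_residual v i4 (ocross i1 i4)) in
  is_imag n /\ oinner n n = 1 /\ oinner i1 n = 0 /\ oinner n i4 = 0 /\
  oinner n (ocross i1 i4) = 0.
Proof.
  intros Hi1 Hi4 Hv N11 N44 N14 Nv1 Hkap Hkap2 n.
  set (i5 := ocross i1 i4) in *.
  assert (Hi5 : is_imag i5) by apply is_imag_ocross.
  assert (N15 : oinner i1 i5 = 0) by (rewrite oinner_comm; apply oinner_ocross_l; auto).
  assert (N45 : oinner i4 i5 = 0) by (rewrite oinner_comm; apply oinner_ocross_r; auto).
  assert (N55 : oinner i5 i5 = 1)
    by (unfold i5; rewrite oinner_ocross_ocross, N11, N44, N14 by auto; ring).
  assert (Hres : forall x, oinner (orth_residual v i4 i5) x =
    oinner v x - oinner v i4 * oinner i4 x - oinner v i5 * oinner i5 x).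
  { intros x; unfold orth_residual; rewrite !oinner_subl, !oinner_scalel; reflexivity. }
  assert (Hn : forall x, oinner n x = / kap * oinner (orth_residual v i4 i5) x)
    by (intros; apply oinner_scalel).
  split; [| split; [| split; [| split]]].
  - apply is_imag_oscale; unfold orth_residual.
    apply is_imag_osub; [apply is_imag_osub |]; auto using is_imag_oscale.
  - assert (Hrr : oinner (orth_residual v i4 i5) (orth_residual v i4 i5) = kap ^ 2).
    { rewrite Hkap2; unfold orth_residual.
      rewrite !oinner_subl, !oinner_subr, !oinner_scalel, !oinner_scaler, N44, N55,
        (oinner_comm i5 i4), N45, (oinner_comm i4 v), (oinner_comm i5 v).
      ring. }
    unfold n; rewrite oinner_scalel, oinner_scaler, Hrr.
    field; lra.
  - rewrite oinner_comm, Hn, Hres, Nv1, (oinner_comm i4 i1), N14, (oinner_comm i5 i1), N15.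
    ring.
  - rewrite Hn, Hres, N44, (oinner_comm i5 i4), N45. ring.
  - rewrite Hn, Hres, N55, N45. ring.
Qed.

Lemma oinner_comm_eq x y c : oinner x y = c -> oinner y x = c.
Proof. intros H; rewrite oinner_comm; exact H. Qed.

Lemma ocross_anticomm_eq x y z : ocross x y = z -> ocross y x = oopp z.
Proof. intros H; rewrite ocross_anticomm, H; reflexivity. Qed.

Ltac frame_facts H :=
  let F := fresh in
  pose proof H as F;
  destruct F as [[Im1 Im2 Im3 Im4 Im5 Im6 Im7 N11 N22 N33 N44 N55 N66 N77 N12 N13 N14 N15 N16
    N17 N23 N24 N25 N26 N27 N34 N35 N36 N37 N45 N46 N47 N56 N57 N67]
    C14 C12 C24 C34 C45 C51 C61 P526];
  repeat match goal with
  | Hxy : oinner ?x ?y = 0 |- _ =>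
      lazymatch goal with
      | _ : oinner y x = 0 |- _ => fail
      | _ => pose proof (oinner_comm_eq _ _ _ Hxy)
      end
  | Hxy : ocross ?x ?y = _ |- _ =>
      lazymatch goal with
      | _ : ocross y x = _ |- _ => fail
      | _ => pose proof (ocross_anticomm_eq _ _ _ Hxy)
      end
  end.

Ltac use_cross_table :=
  repeat match goal with H : ocross ?a ?b = _ |- context [ocross ?a ?b] => rewrite H end.

Ltac expand_ocross :=
  repeat progress (rewrite ?ocross_addl, ?ocross_addr, ?ocross_scalel, ?ocross_scaler,
    ?ocross_oppl, ?ocross_oppr, ?ocross_self; use_cross_table).

Ltac expand_oinner :=
  repeat progress (rewrite ?oinner_addl, ?oinner_addr, ?oinner_subl, ?oinner_subr,
    ?oinner_scalel, ?oinner_scaler, ?oinner_oppl, ?oinner_oppr).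

Ltac use_inner_values :=
  repeat match goal with H : oinner ?a ?b = ?c |- context [oinner ?a ?b] =>
    lazymatch c with context [oinner _ _] => fail | _ => rewrite H end end.

(** * Calculus of octonion-valued functions *)

Definition ocomps (f : R -> oct) (k : nat) (u : R) : R := ocomp (f u) k.
Definition odiff (f : R -> oct) (x : R) : Prop := forall k, ex_derive (ocomps f k) x.
(* [dS g t] is convertibly [odv (g t)]. *)
Definition odv (f : R -> oct) (x : R) : oct := of_comps (fun k => Derive (ocomps f k) x).

Definition of_coords (a : nat -> R -> R) (u : R) : oct := of_comps (fun k => a k u).

Lemma of_coords_ocomps (f : R -> oct) : of_coords (ocomps f) = f.
Proof. extensionality u; unfold of_coords, ocomps; destruct (f u) as [[] []]; reflexivity. Qed.

(* Leibniz rules are proved coordinatewise: [f] is rewritten as [of_coords a] and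
   [auto_derive] works on the eight real functions [a k]. *)
Ltac coordinatize f Hf :=
  let a := fresh "a" in
  revert Hf; rewrite <- (of_coords_ocomps f); unfold odiff;
  generalize (ocomps f) as a; intros a Hf.

Ltac unfold_coords :=
  lazy beta iota zeta delta [q0 q1 q2 q3 oa ob odv ocomps of_coords of_comps ocomp oinner onorm
    ocross ore osub oscale oadd omul oconj oopp qsub qadd qscale qconj qmul qopp].

Ltac solve_coord_derivable :=
  repeat split; try exact I;
  match goal with
  | H : forall k, ex_derive (ocomps (of_coords ?a) k) ?x |- ex_derive (fun y => ?a ?k y) ?x =>
      apply (ex_derive_ext (ocomps (of_coords a) k));
      [intros; reflexivity | apply H]
  | H : ex_derive ?c ?x |- ex_derive (fun y => ?c y) ?x => exact H
  end.

Ltac derive_coord := apply is_derive_unique; auto_derive; [solve_coord_derivable | try field].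

Ltac coord_derive := unfold_coords; try apply oct_eq; derive_coord.

Ltac destruct_comp k := destruct k as [|[|[|[|[|[|[|[|k]]]]]]]].

Ltac coord_derivable :=
  intros k; destruct_comp k;
  unfold_coords; auto_derive; solve_coord_derivable.

Section Leibniz.
Variables (f g : R -> oct) (c : R -> R) (x : R).
Hypotheses (Hf : odiff f x) (Hg : odiff g x) (Hc : ex_derive c x).

Lemma odv_ocross :
  odv (fun u => ocross (f u) (g u)) x = oadd (ocross (odv f x) (g x)) (ocross (f x) (odv g x)).
Proof. coordinatize f Hf; coordinatize g Hg; coord_derive. Qed.

Lemma odv_oadd : odv (fun u => oadd (f u) (g u)) x = oadd (odv f x) (odv g x).
Proof. coordinatize f Hf; coordinatize g Hg; coord_derive. Qed.

Lemma odv_oopp : odv (fun u => oopp (f u)) x = oopp (odv f x).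
Proof. coordinatize f Hf; coord_derive. Qed.

Lemma odv_oscale :
  odv (fun u => oscale (c u) (f u)) x = oadd (oscale (Derive c x) (f x)) (oscale (c x) (odv f x)).
Proof.
  coordinatize f Hf; change (Derive c x) with (Derive (fun y => c y) x); coord_derive.
Qed.

Lemma Derive_oinner :
  Derive (fun u => oinner (f u) (g u)) x = oinner (odv f x) (g x) + oinner (f x) (odv g x).
Proof. coordinatize f Hf; coordinatize g Hg; coord_derive. Qed.

Lemma odiff_ocross : odiff (fun u => ocross (f u) (g u)) x.
Proof. coordinatize f Hf; coordinatize g Hg; coord_derivable. Qed.

Lemma odiff_oadd : odiff (fun u => oadd (f u) (g u)) x.
Proof. coordinatize f Hf; coordinatize g Hg; coord_derivable. Qed.

Lemma odiff_osub : odiff (fun u => osub (f u) (g u)) x.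
Proof. coordinatize f Hf; coordinatize g Hg; coord_derivable. Qed.

Lemma odiff_oscale : odiff (fun u => oscale (c u) (f u)) x.
Proof. coordinatize f Hf; coord_derivable. Qed.

Lemma ex_derive_oinner : ex_derive (fun u => oinner (f u) (g u)) x.
Proof.
  coordinatize f Hf; coordinatize g Hg; unfold_coords; auto_derive; solve_coord_derivable.
Qed.

Lemma oinner_deriv_of_const (a : R) :
  locally x (fun u => oinner (f u) (g u) = a) ->
  oinner (odv f x) (g x) + oinner (f x) (odv g x) = 0.
Proof.
  intros Ha; rewrite <- Derive_oinner, (Derive_ext_loc _ (fun _ => a)) by exact Ha.
  apply Derive_const.
Qed.

End Leibniz.

Lemma odv_ext_loc (f g : R -> oct) (x : R) :
  locally x (fun u => f u = g u) -> odv f x = odv g x.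
Proof.
  intros H; unfold odv; f_equal; extensionality k; apply Derive_ext_loc.
  revert H; apply filter_imp; intros u Hu; unfold ocomps; rewrite Hu; reflexivity.
Qed.

Lemma odiff_ext_loc (f g : R -> oct) (x : R) :
  locally x (fun u => f u = g u) -> odiff f x -> odiff g x.
Proof.
  intros H Hf k; apply (ex_derive_ext_loc (ocomps f k)); [| apply Hf].
  revert H; apply filter_imp; intros u Hu; unfold ocomps; rewrite Hu; reflexivity.
Qed.

Lemma is_imag_odv (f : R -> oct) (x : R) :
  locally x (fun u => is_imag (f u)) -> is_imag (odv f x).
Proof.
  intros H; unfold is_imag, ore, odv, of_comps; simpl.
  rewrite (Derive_ext_loc _ (fun _ => 0)); [apply Derive_const |].
  revert H; apply filter_imp; intros u Hu; exact Hu.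
Qed.

Lemma ocomp_dS (F : R -> R -> oct) t s k :
  ocomp (dS F t s) k = Derive (fun u => ocomp (F t u) k) s.
Proof. destruct_comp k; reflexivity. Qed.

Lemma ocomp_dT (F : R -> R -> oct) t s k :
  ocomp (dT F t s) k = Derive (fun u => ocomp (F u s) k) t.
Proof. destruct_comp k; reflexivity. Qed.

Lemma oct_ext (x y : oct) : (forall k, ocomp x k = ocomp y k) -> x = y.
Proof.
  intros H; destruct_oct x; destruct_oct y.
  apply oct_eq; [exact (H 0%nat) | exact (H 1%nat) | exact (H 2%nat) | exact (H 3%nat)
    | exact (H 4%nat) | exact (H 5%nat) | exact (H 6%nat) | exact (H 7%nat)].
Qed.

Section Smooth.
Variables (F : R -> R -> oct) (t s : R).

Lemma smooth_at_dS : smooth_at F t s -> smooth_at (dS F) t s.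
Proof.
  intros H k n.
  replace (fun t' s' => ocomp (dS F t' s') k)
    with (fun u v => Derive (fun z => ocomp (F u z) k) v)
    by (extensionality u; extensionality v; symmetry; apply ocomp_dS).
  apply ex_diff_n_deriv_aux2, H.
Qed.

Lemma smooth_at_dT : smooth_at F t s -> smooth_at (dT F) t s.
Proof.
  intros H k n.
  replace (fun t' s' => ocomp (dT F t' s') k)
    with (fun u v => Derive (fun z => ocomp (F z v) k) u)
    by (extensionality u; extensionality v; symmetry; apply ocomp_dT).
  apply ex_diff_n_deriv_aux1, H.
Qed.

Lemma smooth_odiff_s : smooth_at F t s -> odiff (F t) s.
Proof. intros H k; apply (H k 1%nat). Qed.

Lemma smooth_odiff_t : smooth_at F t s -> odiff (fun u => F u s) t.
Proof. intros H k; apply (H k 1%nat). Qed.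

Lemma dT_dS_comm : locally_2d (smooth_at F) t s -> dT (dS F) t s = dS (dT F) t s.
Proof.
  intros [d Hd]; apply oct_ext; intros k.
  rewrite ocomp_dT, ocomp_dS.
  rewrite (Derive_ext (fun z => ocomp (dS F z s) k)
    (fun z => Derive (fun w => ocomp (F z w) k) s)) by (intros; apply ocomp_dS).
  rewrite (Derive_ext (fun z => ocomp (dT F t z) k)
    (fun z => Derive (fun w => ocomp (F w z) k) t)) by (intros; apply ocomp_dT).
  set (f := fun a b => ocomp (F a b) k).
  change (Derive (fun z => Derive (fun w => f z w) s) t =
          Derive (fun z => Derive (fun w => f w z) t) s).
  assert (H2 : forall u v, Rabs (u - t) < d -> Rabs (v - s) < d -> ex_diff_n f 2 u v)
    by (intros u v Hu Hv; apply (Hd u v Hu Hv)).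
  assert (Hc : Rabs (t - t) < d /\ Rabs (s - s) < d)
    by (rewrite !Rminus_eq_0, Rabs_R0; split; apply cond_pos).
  destruct (H2 t s (proj1 Hc) (proj2 Hc))
    as [_ [_ [_ [[_ [_ [_ [_ [C _]]]]] [_ [_ [_ [[D _] _]]]]]]]].
  apply Schwarz; [| exact D | exact C].
  exists d; intros u v Hu Hv.
  destruct (H2 u v Hu Hv) as [_ [A [B [[_ [_ [C1 _]]] [_ [D1 _]]]]]].
  repeat split; assumption.
Qed.

End Smooth.

Lemma locally_in_interval (a b : Rbar) (x : R) :
  Rbar_lt a x -> Rbar_lt x b -> locally x (fun u => Rbar_lt a u /\ Rbar_lt u b).
Proof.
  intros Ha Hb; apply filter_and; [apply (open_Rbar_gt' x a Ha) | apply (open_Rbar_lt' x b Hb)].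
Qed.

Lemma in_rect_locally_2d (ta tb sa sb : Rbar) (t s : R) :
  in_rect ta tb sa sb t s -> locally_2d (in_rect ta tb sa sb) t s.
Proof.
  intros [H1 [H2 [H3 H4]]].
  destruct (locally_in_interval ta tb t H1 H2) as [d1 D1].
  destruct (locally_in_interval sa sb s H3 H4) as [d2 D2].
  exists (mkposreal _ (Rmin_stable_in_posreal d1 d2)); simpl; intros u v Hu Hv.
  destruct (D1 u) as [A B]; [apply (Rlt_le_trans _ _ _ Hu), Rmin_l |].
  destruct (D2 v) as [C D]; [apply (Rlt_le_trans _ _ _ Hv), Rmin_r |].
  repeat split; assumption.
Qed.

Lemma sqrt_pos_inv (x : R) : 0 < sqrt x -> 0 < x.
Proof.
  intros H; destruct (Rle_lt_dec x 0) as [Hle | Hlt]; [| exact Hlt].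
  rewrite sqrt_neg_0 in H by exact Hle; lra.
Qed.

Lemma ex_derive_sqrt_sub_sq (a b c : R -> R) (x : R) :
  ex_derive a x -> ex_derive b x -> ex_derive c x -> 0 < a x - b x ^ 2 - c x ^ 2 ->
  ex_derive (fun u => sqrt (a u - b u ^ 2 - c u ^ 2)) x.
Proof. intros; auto_derive; auto. Qed.

Section Normalize.
Variables (f : R -> oct) (x : R).
Hypotheses (Hf : odiff f x) (Hpos : 0 < oinner (f x) (f x)).

Lemma onorm_pos : 0 < onorm (f x).
Proof. apply sqrt_lt_R0, Hpos. Qed.

Lemma is_derive_onorm :
  is_derive (fun u => onorm (f u)) x (oinner (odv f x) (f x) / onorm (f x)).
Proof.
  replace (oinner (odv f x) (f x) / onorm (f x))
    with (Derive (fun u => oinner (f u) (f u)) x / (2 * onorm (f x))).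
  - apply (is_derive_sqrt (fun u => oinner (f u) (f u))); [| exact Hpos].
    apply Derive_correct, ex_derive_oinner; assumption.
  - rewrite Derive_oinner, (oinner_comm (f x)) by assumption.
    field; apply Rgt_not_eq, onorm_pos.
Qed.

Lemma ex_derive_onorm : ex_derive (fun u => onorm (f u)) x.
Proof. exact (ex_intro _ _ is_derive_onorm). Qed.

Lemma is_derive_inv_onorm :
  is_derive (fun u => / onorm (f u)) x (- oinner (odv f x) (f x) / onorm (f x) ^ 3).
Proof.
  pose proof onorm_pos as Hn.
  replace (- oinner (odv f x) (f x) / onorm (f x) ^ 3)
    with (- (oinner (odv f x) (f x) / onorm (f x)) / onorm (f x) ^ 2) by (field; lra).
  apply (is_derive_inv (fun u => onorm (f u))); [exact is_derive_onorm | lra].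
Qed.

Lemma ex_derive_inv_onorm : ex_derive (fun u => / onorm (f u)) x.
Proof. exact (ex_intro _ _ is_derive_inv_onorm). Qed.

End Normalize.

Lemma Cmod_cexpmi x : Cmod (cexpmi x) = 1.
Proof.
  unfold Cmod, cexpmi; simpl.
  replace (cos x * (cos x * 1) + - sin x * (- sin x * 1)) with 1; [apply sqrt_1 |].
  pose proof (sin2_cos2 x); unfold Rsqr in *; nra.
Qed.

Lemma Cmod_scaled_cexpmi x : Cmod (Cmult (RtoC (/ sqrt 2)) (cexpmi x)) = / sqrt 2.
Proof.
  rewrite Cmod_mult, Cmod_cexpmi, Cmod_R, Rabs_pos_eq; [ring |].
  apply Rlt_le, Rinv_0_lt_compat, Rlt_sqrt2_0.
Qed.

Lemma Cmod_rC (g : R -> R -> oct) t s : Cmod (rC g t s) = / sqrt 2.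
Proof. apply Cmod_scaled_cexpmi. Qed.

Lemma Cmod_qC (g : R -> R -> oct) t s : Cmod (qC g t s) = / sqrt 2.
Proof. apply Cmod_scaled_cexpmi. Qed.

Lemma sqrt2_Cmod_phi1 (g : R -> R -> oct) t s :
  0 < k1 g t s -> sqrt 2 * Cmod (phi1 g t s) = k1 g t s.
Proof.
  intros Hk; unfold phi1.
  rewrite Cmod_mult, Cmod_conj, Cmod_rC, Cmod_R, Rabs_pos_eq by lra.
  field; apply Rgt_not_eq, Rlt_sqrt2_0.
Qed.

Lemma Cmod_phi2 (g : R -> R -> oct) t s : 0 < kappa2 g t s -> Cmod (phi2 g t s) = kappa2 g t s.
Proof.
  intros Hk; unfold phi2.
  rewrite !Cmod_mult, Cmod_conj, Cmod_rC, Cmod_qC, Cmod_R, Rabs_pos_eq by lra.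
  rewrite <- Rinv_mult, sqrt_sqrt by lra; field.
Qed.

Lemma phi3_eq_0 (g : R -> R -> oct) t s :
  phi3 g t s = RtoC 0 -> alpha g t s = 0 /\ beta1 g t s + beta2 g t s = 0.
Proof.
  intros H; apply (f_equal Cmod) in H; unfold phi3 in H.
  rewrite !Cmod_mult, Cmod_rC, Cmod_qC, Cmod_R, Cmod_0, Rabs_Ropp,
    Rabs_pos_eq in H by apply Rlt_le, Rlt_sqrt2_0.
  assert (Hs : sqrt 2 <> 0) by apply Rgt_not_eq, Rlt_sqrt2_0.
  assert (Hz : Cmod (2 * alpha g t s, beta1 g t s + beta2 g t s) = 0).
  { apply (Rmult_eq_reg_l (sqrt 2 * (/ sqrt 2 * / sqrt 2 * / sqrt 2))).
    - rewrite Rmult_0_r, <- H; ring.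
    - repeat apply Rmult_integral_contrapositive_currified; auto using Rinv_neq_0_compat. }
  apply Cmod_eq_0 in Hz; injection Hz; intros; lra.
Qed.

(* [theta] rotates (E4, E7) so that the new E7-component of [h E4 - (3/2) k E7] vanishes. *)
Lemma acos_rotation_cancel (h k : R) : 0 < k ->
  sin (acos (h / sqrt (h ^ 2 + 9 / 4 * k ^ 2))) * h
  + cos (acos (h / sqrt (h ^ 2 + 9 / 4 * k ^ 2))) * (- (3 / 2) * k) = 0.
Proof.
  intros Hk; set (S := sqrt (h ^ 2 + 9 / 4 * k ^ 2)).
  assert (HS2 : S * S = h ^ 2 + 9 / 4 * k ^ 2) by (apply sqrt_sqrt; nra).
  assert (HS : Rabs h < S).
  { unfold S; rewrite <- sqrt_Rsqr_abs; apply sqrt_lt_1_alt; unfold Rsqr; split; nra. }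
  assert (HSp : 0 < S) by (pose proof (Rabs_pos h); lra).
  destruct (Rabs_def2 _ _ HS) as [HS1 HS3].
  assert (Hb : -1 <= h / S <= 1).
  { split; apply (Rmult_le_reg_r S); auto; unfold Rdiv; rewrite Rmult_assoc, Rinv_l; lra. }
  rewrite cos_acos, sin_acos by exact Hb.
  replace (1 - (h / S)²) with ((3 / 2 * k / S)²).
  - rewrite sqrt_Rsqr; [field; lra |].
    apply Rmult_le_pos; [lra | apply Rlt_le, Rinv_0_lt_compat, HSp].
  - unfold Rsqr; transitivity ((S * S - h ^ 2) / (S * S)); [| field; lra].
    replace (S * S - h ^ 2) with (9 / 4 * k ^ 2) by lra; field; lra.
Qed.

(** * The moving frame of the flow *)

Section Flow.
Variables (gamma : R -> R -> oct) (ta tb sa sb : Rbar).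
Local Notation D := (in_rect ta tb sa sb).
Hypothesis Hsmooth : forall t s : R, D t s -> smooth_at gamma t s.
Hypothesis Himag : forall t s : R, D t s -> is_imag (gamma t s).
Hypothesis Hflow : forall t s : R, D t s ->
  dT gamma t s = ocross (dS gamma t s) (dS (dS gamma) t s).
Hypothesis Hunit : forall t s : R, D t s -> onorm (dS gamma t s) = 1.
Hypothesis Hk1 : forall t s : R, D t s -> 0 < k1 gamma t s.
Hypothesis Hk2 : forall t s : R, D t s -> 0 < kappa2 gamma t s.
Hypothesis Hphi3 : forall t s : R, D t s -> phi3 gamma t s = RtoC 0.

Lemma near_s t s (P : R -> Prop) : D t s -> (forall u, D t u -> P u) -> locally s P.
Proof.
  intros Hts HP; apply (filter_imp (fun u => D t u)); [exact HP |].
  apply locally_2d_1d_const_x, in_rect_locally_2d, Hts.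
Qed.

Lemma near_t t s (P : R -> Prop) : D t s -> (forall u, D u s -> P u) -> locally t P.
Proof.
  intros Hts HP; apply (filter_imp (fun u => D u s)); [exact HP |].
  apply (locally_2d_1d_const_y D), in_rect_locally_2d, Hts.
Qed.

Lemma smooth_iter n t s : D t s -> smooth_at (Nat.iter n dS gamma) t s.
Proof. intros Hts; induction n; [exact (Hsmooth t s Hts) | apply smooth_at_dS, IHn]. Qed.

Lemma is_imag_iter n : forall t s, D t s -> is_imag (Nat.iter n dS gamma t s).
Proof.
  induction n as [| n IHn]; intros t s Hts; [exact (Himag t s Hts) |].
  apply is_imag_odv, (near_s t s); [exact Hts | intros u Hu; exact (IHn t u Hu)].
Qed.

Lemma odiff_iter_s n t s : D t s -> odiff (Nat.iter n dS gamma t) s.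
Proof. intros Hts; apply smooth_odiff_s, smooth_iter, Hts. Qed.

Lemma odiff_iter_t n t s : D t s -> odiff (fun u => Nat.iter n dS gamma u s) t.
Proof. intros Hts; apply smooth_odiff_t, smooth_iter, Hts. Qed.

Lemma k1_sq_pos t s : D t s -> 0 < oinner (dS (dS gamma) t s) (dS (dS gamma) t s).
Proof. intros Hts; apply sqrt_pos_inv, Hk1, Hts. Qed.

Lemma k1_neq0 t s : D t s -> k1 gamma t s <> 0.
Proof. intros Hts; apply Rgt_not_eq, Hk1, Hts. Qed.

Lemma dS2_eq t s : D t s -> dS (dS gamma) t s = oscale (k1 gamma t s) (I1 gamma t s).
Proof.
  intros Hts; unfold I1; rewrite oscale_scale, Rinv_r, oscale_1 by (apply k1_neq0, Hts).
  reflexivity.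
Qed.

Lemma k1_sq t s : k1 gamma t s ^ 2 = oinner (dS (dS gamma) t s) (dS (dS gamma) t s).
Proof. apply pow2_sqrt, oinner_self_ge0. Qed.

Lemma I4_unit t s : D t s -> oinner (I4 gamma t s) (I4 gamma t s) = 1.
Proof.
  intros Hts; pose proof (pow2_sqrt _ (oinner_self_ge0 (I4 gamma t s))) as E.
  change (onorm (dS gamma t s) ^ 2 = oinner (I4 gamma t s) (I4 gamma t s)) in E.
  rewrite (Hunit t s Hts) in E; lra.
Qed.

Lemma I1_unit t s : D t s -> oinner (I1 gamma t s) (I1 gamma t s) = 1.
Proof.
  intros Hts; unfold I1; rewrite oinner_scalel, oinner_scaler.
  change (dS (I4 gamma)) with (dS (dS gamma)); rewrite <- k1_sq.
  field; apply k1_neq0, Hts.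
Qed.

Lemma ex_derive_inv_k1_s t s : D t s -> ex_derive (fun u => / k1 gamma t u) s.
Proof.
  intros Hts; apply (ex_derive_inv_onorm (dS (dS gamma) t));
    [apply (odiff_iter_s 2), Hts | apply k1_sq_pos, Hts].
Qed.

Lemma odiff_I4 t s : D t s -> odiff (I4 gamma t) s.
Proof. apply (odiff_iter_s 1). Qed.

Lemma odiff_I1 t s : D t s -> odiff (I1 gamma t) s.
Proof.
  intros Hts; apply (odiff_oscale (fun u => dS (I4 gamma) t u) (fun u => / k1 gamma t u));
    [apply (odiff_iter_s 2) | apply ex_derive_inv_k1_s]; exact Hts.
Qed.

Lemma odiff_I5 t s : D t s -> odiff (I5 gamma t) s.
Proof. intros Hts; apply odiff_ocross; [apply odiff_I1 | apply odiff_I4]; exact Hts. Qed.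

Lemma dS_oinner_const (F G : R -> R -> oct) (c : R) t s :
  D t s -> odiff (F t) s -> odiff (G t) s -> (forall u, D t u -> oinner (F t u) (G t u) = c) ->
  oinner (dS F t s) (G t s) = - oinner (F t s) (dS G t s).
Proof.
  intros Hts HF HG Hc.
  pose proof (oinner_deriv_of_const (F t) (G t) s HF HG c (near_s t s _ Hts Hc)) as E.
  change (odv (F t) s) with (dS F t s) in E; change (odv (G t) s) with (dS G t s) in E.
  lra.
Qed.

Lemma dS_orth_unit (F : R -> R -> oct) t s :
  D t s -> odiff (F t) s -> (forall u, D t u -> oinner (F t u) (F t u) = 1) ->
  oinner (dS F t s) (F t s) = 0.
Proof.
  intros Hts HF H1; pose proof (dS_oinner_const F F 1 t s Hts HF HF H1) as E.
  rewrite (oinner_comm (F t s)) in E; lra.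
Qed.

Lemma I1_I4_orth t s : D t s -> oinner (I1 gamma t s) (I4 gamma t s) = 0.
Proof.
  intros Hts; unfold I1; rewrite oinner_scalel, (dS_orth_unit (I4 gamma) t s Hts).
  - ring.
  - apply odiff_I4, Hts.
  - intros u Hu; apply I4_unit, Hu.
Qed.

Lemma dS_I1_I1 t s : D t s -> oinner (dS (I1 gamma) t s) (I1 gamma t s) = 0.
Proof.
  intros Hts; apply dS_orth_unit; [exact Hts | apply odiff_I1, Hts | intros u Hu].
  apply I1_unit, Hu.
Qed.

Lemma dS_I1_I4 t s : D t s -> oinner (dS (I1 gamma) t s) (I4 gamma t s) = - k1 gamma t s.
Proof.
  intros Hts; rewrite (dS_oinner_const (I1 gamma) (I4 gamma) 0 t s Hts).
  - rewrite dS2_eq, oinner_scaler, I1_unit by exact Hts; ring.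
  - apply odiff_I1, Hts.
  - apply odiff_I4, Hts.
  - intros u Hu; apply I1_I4_orth, Hu.
Qed.

Lemma kappa2_sqrt t s :
  kappa2 gamma t s = sqrt (oinner (dS (I1 gamma) t s) (dS (I1 gamma) t s)
    - oinner (dS (I1 gamma) t s) (I4 gamma t s) ^ 2
    - oinner (dS (I1 gamma) t s) (I5 gamma t s) ^ 2).
Proof. unfold kappa2, onorm; rewrite pow2_sqrt by apply oinner_self_ge0; reflexivity. Qed.

Lemma kappa2_sq t s : D t s ->
  kappa2 gamma t s ^ 2 = oinner (dS (I1 gamma) t s) (dS (I1 gamma) t s)
    - oinner (dS (I1 gamma) t s) (I4 gamma t s) ^ 2
    - oinner (dS (I1 gamma) t s) (I5 gamma t s) ^ 2.
Proof.
  intros Hts; pose proof (Hk2 t s Hts) as Hk; rewrite kappa2_sqrt in *.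
  apply pow2_sqrt, Rlt_le, sqrt_pos_inv, Hk.
Qed.

Lemma frame_at t s : D t s ->
  g2_frame (I1 gamma t s) (I2 gamma t s) (I3 gamma t s) (I4 gamma t s) (I5 gamma t s)
    (I6 gamma t s) (I7 gamma t s).
Proof.
  intros Hts.
  assert (Hi1 : is_imag (I1 gamma t s)) by (apply is_imag_oscale, (is_imag_iter 2), Hts).
  assert (Hi4 : is_imag (I4 gamma t s)) by (apply (is_imag_iter 1), Hts).
  assert (Hv : is_imag (dS (I1 gamma) t s)).
  { apply is_imag_odv, (near_s t s _ Hts); intros u Hu.
    apply is_imag_oscale, (is_imag_iter 2), Hu. }
  destruct (unit_orth_residual _ _ _ (kappa2 gamma t s) Hi1 Hi4 Hv (I1_unit t s Hts)
    (I4_unit t s Hts) (I1_I4_orth t s Hts) (dS_I1_I1 t s Hts) (Hk2 t s Hts)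
    (kappa2_sq t s Hts)) as [Hi2 [N22 [N12 [N24 N25]]]].
  exact (g2_frame_of_triple _ _ _ Hi1 Hi2 Hi4 (I1_unit t s Hts) N22 (I4_unit t s Hts) N12
    (I1_I4_orth t s Hts) N24 N25).
Qed.

Lemma dS_I1_eq t s : D t s ->
  dS (I1 gamma) t s = oadd (oscale (- k1 gamma t s) (I4 gamma t s))
    (oadd (oscale (rho1 gamma t s) (I5 gamma t s)) (oscale (kappa2 gamma t s) (I2 gamma t s))).
Proof.
  intros Hts; rewrite <- (dS_I1_I4 t s Hts); unfold rho1, I2.
  apply orth_residual_decomp, Rgt_not_eq, Hk2, Hts.
Qed.

Lemma Derive_inv_k1_s t s : D t s ->
  Derive (fun u => / k1 gamma t u) s =
  - oinner (dS (dS (dS gamma)) t s) (dS (dS gamma) t s) / k1 gamma t s ^ 3.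
Proof.
  intros Hts; apply is_derive_unique.
  exact (is_derive_inv_onorm (dS (dS gamma) t) s (odiff_iter_s 2 t s Hts) (k1_sq_pos t s Hts)).
Qed.

Lemma dS_I1_formula t s : D t s ->
  dS (I1 gamma) t s =
  oadd (oscale (- oinner (dS (dS (dS gamma)) t s) (dS (dS gamma) t s) / k1 gamma t s ^ 3)
          (dS (dS gamma) t s))
       (oscale (/ k1 gamma t s) (dS (dS (dS gamma)) t s)).
Proof.
  intros Hts; change (dS (I1 gamma) t s)
    with (odv (fun u => oscale (/ k1 gamma t u) (dS (dS gamma) t u)) s).
  rewrite odv_oscale.
  - rewrite Derive_inv_k1_s by exact Hts; reflexivity.
  - apply (odiff_iter_s 2), Hts.
  - apply ex_derive_inv_k1_s, Hts.
Qed.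

Lemma odiff_dS_I1 t s : D t s -> odiff (dS (I1 gamma) t) s.
Proof.
  intros Hts; apply (odiff_ext_loc (fun u =>
    oadd (oscale (- oinner (dS (dS (dS gamma)) t u) (dS (dS gamma) t u) / k1 gamma t u ^ 3)
            (dS (dS gamma) t u))
         (oscale (/ k1 gamma t u) (dS (dS (dS gamma)) t u)))).
  { apply (near_s t s _ Hts); intros u Hu; symmetry; apply dS_I1_formula, Hu. }
  pose proof (odiff_iter_s 2 t s Hts) as H2; pose proof (odiff_iter_s 3 t s Hts) as H3.
  apply odiff_oadd; apply odiff_oscale; try assumption; [| apply ex_derive_inv_k1_s, Hts].
  apply (ex_derive_div (fun u => - oinner (dS (dS (dS gamma)) t u) (dS (dS gamma) t u))
    (fun u => k1 gamma t u ^ 3)).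
  - apply (ex_derive_opp (fun u => oinner (dS (dS (dS gamma)) t u) (dS (dS gamma) t u))),
      ex_derive_oinner; assumption.
  - apply (ex_derive_pow (fun u => k1 gamma t u)), ex_derive_onorm; [exact H2 |].
    apply k1_sq_pos, Hts.
  - apply pow_nonzero, k1_neq0, Hts.
Qed.

Lemma ex_derive_kappa2_s t s : D t s -> ex_derive (fun u => kappa2 gamma t u) s.
Proof.
  intros Hts; apply (ex_derive_ext _ _ _ (fun u => eq_sym (kappa2_sqrt t u))).
  pose proof (odiff_dS_I1 t s Hts) as Hv.
  apply (ex_derive_sqrt_sub_sq (fun u => oinner (dS (I1 gamma) t u) (dS (I1 gamma) t u))
    (fun u => oinner (dS (I1 gamma) t u) (I4 gamma t u))
    (fun u => oinner (dS (I1 gamma) t u) (I5 gamma t u)));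
    try (apply ex_derive_oinner; auto using odiff_I4, odiff_I5).
  rewrite <- kappa2_sq by exact Hts; apply pow_lt, Hk2, Hts.
Qed.

Lemma odiff_I2 t s : D t s -> odiff (I2 gamma t) s.
Proof.
  intros Hts.
  pose proof (odiff_dS_I1 t s Hts) as Hv; pose proof (odiff_I4 t s Hts) as H4;
    pose proof (odiff_I5 t s Hts) as H5.
  change (odiff (fun u => oscale (/ kappa2 gamma t u)
    (osub (osub (dS (I1 gamma) t u)
                (oscale (oinner (dS (I1 gamma) t u) (I4 gamma t u)) (I4 gamma t u)))
          (oscale (oinner (dS (I1 gamma) t u) (I5 gamma t u)) (I5 gamma t u)))) s).
  apply odiff_oscale; [apply odiff_osub; [apply odiff_osub |] |].
  - exact Hv.
  - apply odiff_oscale; [exact H4 | apply ex_derive_oinner; assumption].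
  - apply odiff_oscale; [exact H5 | apply ex_derive_oinner; assumption].
  - apply ex_derive_inv; [apply ex_derive_kappa2_s | apply Rgt_not_eq, Hk2]; exact Hts.
Qed.

Lemma odiff_I3 t s : D t s -> odiff (I3 gamma t) s.
Proof. intros Hts; apply odiff_ocross; [apply odiff_I1 | apply odiff_I2]; exact Hts. Qed.

Lemma odiff_I7 t s : D t s -> odiff (I7 gamma t) s.
Proof. intros Hts; apply odiff_ocross; [apply odiff_I3 | apply odiff_I4]; exact Hts. Qed.

Lemma ex_derive_k1_s t s : D t s -> ex_derive (fun u => k1 gamma t u) s.
Proof.
  intros Hts; apply (ex_derive_onorm (dS (dS gamma) t));
    [apply (odiff_iter_s 2), Hts | apply k1_sq_pos, Hts].
Qed.

Lemma ex_derive_inv_k1_t t s : D t s -> ex_derive (fun u => / k1 gamma u s) t.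
Proof.
  intros Hts; apply (ex_derive_inv_onorm (fun u => dS (dS gamma) u s));
    [apply (odiff_iter_t 2), Hts | apply k1_sq_pos, Hts].
Qed.

Lemma dS_I5_eq t s : D t s ->
  dS (I5 gamma) t s =
  oadd (ocross (dS (I1 gamma) t s) (I4 gamma t s)) (ocross (I1 gamma t s) (dS (dS gamma) t s)).
Proof. intros Hts; apply odv_ocross; [apply odiff_I1 | apply odiff_I4]; exact Hts. Qed.

Lemma dS_I3_eq t s : D t s ->
  dS (I3 gamma) t s =
  oadd (ocross (dS (I1 gamma) t s) (I2 gamma t s)) (ocross (I1 gamma t s) (dS (I2 gamma) t s)).
Proof. intros Hts; apply odv_ocross; [apply odiff_I1 | apply odiff_I2]; exact Hts. Qed.

Lemma dS_oppI5_eq t s : D t s ->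
  dS (fun t s => oopp (I5 gamma t s)) t s = oopp (dS (I5 gamma) t s).
Proof. intros Hts; apply odv_oopp, odiff_I5, Hts. Qed.

Lemma dS3_eq t s : D t s ->
  dS (dS (dS gamma)) t s = oadd (oscale (Derive (fun u => k1 gamma t u) s) (I1 gamma t s))
                                (oscale (k1 gamma t s) (dS (I1 gamma) t s)).
Proof.
  intros Hts; change (dS (dS (dS gamma)) t s) with (odv (dS (dS gamma) t) s).
  rewrite (odv_ext_loc _ (fun u => oscale (k1 gamma t u) (I1 gamma t u))).
  - apply odv_oscale; [apply odiff_I1 | apply ex_derive_k1_s]; exact Hts.
  - apply (near_s t s _ Hts); intros u Hu; apply dS2_eq, Hu.
Qed.

Lemma smooth_iter_2d n t s : D t s -> locally_2d (smooth_at (Nat.iter n dS gamma)) t s.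
Proof.
  intros Hts; apply (locally_2d_impl D); [| apply in_rect_locally_2d, Hts].
  apply locally_2d_forall; intros u v; apply smooth_iter.
Qed.

Lemma dT_dS_eq t s : D t s ->
  dT (dS gamma) t s =
  oadd (ocross (dS (dS gamma) t s) (dS (dS gamma) t s))
       (ocross (dS gamma t s) (dS (dS (dS gamma)) t s)).
Proof.
  intros Hts; rewrite dT_dS_comm by exact (smooth_iter_2d 0 t s Hts).
  change (dS (dT gamma) t s) with (odv (dT gamma t) s).
  rewrite (odv_ext_loc _ (fun u => ocross (dS gamma t u) (dS (dS gamma) t u))).
  - apply odv_ocross; [apply (odiff_iter_s 1) | apply (odiff_iter_s 2)]; exact Hts.
  - apply (near_s t s _ Hts); intros u Hu; apply Hflow, Hu.
Qed.

Lemma dT_dS2_eq t s : D t s ->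
  dT (dS (dS gamma)) t s =
  oadd (oadd (ocross (dS (dS (dS gamma)) t s) (dS (dS gamma) t s))
             (ocross (dS (dS gamma) t s) (dS (dS (dS gamma)) t s)))
       (oadd (ocross (dS (dS gamma) t s) (dS (dS (dS gamma)) t s))
             (ocross (dS gamma t s) (dS (dS (dS (dS gamma))) t s))).
Proof.
  intros Hts; rewrite dT_dS_comm by exact (smooth_iter_2d 1 t s Hts).
  change (dS (dT (dS gamma)) t s) with (odv (dT (dS gamma) t) s).
  rewrite (odv_ext_loc _ (fun u => oadd (ocross (dS (dS gamma) t u) (dS (dS gamma) t u))
                                        (ocross (dS gamma t u) (dS (dS (dS gamma)) t u)))).
  - pose proof (odiff_iter_s 1 t s Hts) as H1; pose proof (odiff_iter_s 2 t s Hts) as H2;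
      pose proof (odiff_iter_s 3 t s Hts) as H3.
    rewrite odv_oadd by (apply odiff_ocross; assumption).
    rewrite !odv_ocross by assumption; reflexivity.
  - apply (near_s t s _ Hts); intros u Hu; apply dT_dS_eq, Hu.
Qed.

Lemma dT_dT_eq t s : D t s ->
  dT (dT gamma) t s =
  oadd (ocross (dT (dS gamma) t s) (dS (dS gamma) t s))
       (ocross (dS gamma t s) (dT (dS (dS gamma)) t s)).
Proof.
  intros Hts; change (dT (dT gamma) t s) with (odv (fun u => dT gamma u s) t).
  rewrite (odv_ext_loc _ (fun u => ocross (dS gamma u s) (dS (dS gamma) u s))).
  - apply odv_ocross; [apply (odiff_iter_t 1) | apply (odiff_iter_t 2)]; exact Hts.
  - apply (near_t t s _ Hts); intros u Hu; apply Hflow, Hu.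
Qed.

Lemma oppI5_eq t s : D t s -> oopp (I5 gamma t s) = oscale (/ k1 gamma t s) (dT gamma t s).
Proof.
  intros Hts; frame_facts (frame_at t s Hts).
  rewrite Hflow, dS2_eq, ocross_scaler by exact Hts.
  change (dS gamma t s) with (I4 gamma t s).
  use_cross_table; rewrite oscale_scale, Rinv_l, oscale_1 by (apply k1_neq0, Hts); reflexivity.
Qed.

Lemma dT_oppI5_eq t s : D t s ->
  dT (fun t s => oopp (I5 gamma t s)) t s =
  oadd (oscale (Derive (fun u => / k1 gamma u s) t) (dT gamma t s))
       (oscale (/ k1 gamma t s) (dT (dT gamma) t s)).
Proof.
  intros Hts; change (dT (fun t s => oopp (I5 gamma t s)) t s)
    with (odv (fun u => oopp (I5 gamma u s)) t).
  rewrite (odv_ext_loc _ (fun u => oscale (/ k1 gamma u s) (dT gamma u s))).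
  - apply odv_oscale; [| apply ex_derive_inv_k1_t, Hts].
    apply smooth_odiff_t, smooth_at_dT, Hsmooth, Hts.
  - apply (near_t t s _ Hts); intros u Hu; apply oppI5_eq, Hu.
Qed.

Lemma dS_I4_perp_I1 t s Y : D t s -> oinner (I1 gamma t s) Y = 0 ->
  oinner (dS (I4 gamma) t s) Y = 0.
Proof.
  intros Hts HY; change (dS (I4 gamma)) with (dS (dS gamma)).
  rewrite dS2_eq, oinner_scalel, HY by exact Hts; ring.
Qed.

Lemma dS_oppI5_perp t s Y : D t s ->
  oinner (I1 gamma t s) Y = 0 -> oinner (I6 gamma t s) Y = 0 ->
  oinner (dS (fun t s => oopp (I5 gamma t s)) t s) Y = 0.
Proof.
  intros Hts Y1 Y6; frame_facts (frame_at t s Hts).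
  rewrite dS_oppI5_eq, dS_I5_eq, dS_I1_eq, dS2_eq by exact Hts.
  expand_ocross; expand_oinner; rewrite Y1, Y6; ring.
Qed.

Lemma dT_I4_perp t s Y : D t s ->
  oinner (I1 gamma t s) Y = 0 -> oinner (I4 gamma t s) Y = 0 -> oinner (I5 gamma t s) Y = 0 ->
  oinner (I6 gamma t s) Y = 0 -> oinner (dT (I4 gamma) t s) Y = 0.
Proof.
  intros Hts Y1 Y4 Y5 Y6; frame_facts (frame_at t s Hts).
  change (dT (I4 gamma)) with (dT (dS gamma)).
  rewrite dT_dS_eq, dS3_eq, dS_I1_eq, dS2_eq by exact Hts.
  change (dS gamma t s) with (I4 gamma t s).
  expand_ocross; expand_oinner; rewrite Y1, Y4, Y5, Y6; ring.
Qed.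

Lemma is_imag_dS_I2 t s : D t s -> is_imag (dS (I2 gamma) t s).
Proof.
  intros Hts; apply is_imag_odv, (near_s t s _ Hts); intros u Hu.
  exact (im2 _ _ _ _ _ _ _ (g2_orthonormal _ _ _ _ _ _ _ (frame_at t u Hu))).
Qed.

Lemma beta2_eq t s : D t s -> beta2 gamma t s = k1 gamma t s + beta1 gamma t s.
Proof.
  intros Hts; frame_facts (frame_at t s Hts); unfold beta2, beta1.
  rewrite dS_I3_eq, dS_I1_eq by exact Hts.
  expand_ocross; expand_oinner; use_inner_values.
  rewrite <- (oinner_ocross_cycle (I6 gamma t s) (I1 gamma t s) (dS (I2 gamma) t s))
    by (auto; apply is_imag_dS_I2, Hts).
  rewrite C61, (oinner_comm (I7 gamma t s)); ring.
Qed.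

Section PerpField.
Variable Y : R -> R -> oct.
Hypothesis HY1 : forall t s, D t s -> oinner (I1 gamma t s) (Y t s) = 0.
Hypothesis HY2 : forall t s, D t s -> oinner (I2 gamma t s) (Y t s) = 0.
Hypothesis HY4 : forall t s, D t s -> oinner (I4 gamma t s) (Y t s) = 0.
Hypothesis HY5 : forall t s, D t s -> oinner (I5 gamma t s) (Y t s) = 0.
Hypothesis HY6 : forall t s, D t s -> oinner (I6 gamma t s) (Y t s) = 0.
Hypothesis HYd : forall t s, D t s -> odiff (Y t) s.

Lemma dS_I1_perp t s : D t s -> oinner (dS (I1 gamma) t s) (Y t s) = 0.
Proof.
  intros Hts; rewrite dS_I1_eq by exact Hts; expand_oinner.
  rewrite HY2, HY4, HY5 by exact Hts; ring.
Qed.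

Lemma dS3_perp t s : D t s -> oinner (dS (dS (dS gamma)) t s) (Y t s) = 0.
Proof.
  intros Hts; rewrite dS3_eq by exact Hts; expand_oinner.
  rewrite HY1, dS_I1_perp by exact Hts; ring.
Qed.

Lemma dS_I5_perp t s : D t s -> oinner (dS (I5 gamma) t s) (Y t s) = 0.
Proof.
  intros Hts; pose proof (HY1 t s Hts); pose proof (HY6 t s Hts).
  frame_facts (frame_at t s Hts).
  rewrite dS_I5_eq, dS_I1_eq, dS2_eq by exact Hts.
  expand_ocross; expand_oinner; use_inner_values; ring.
Qed.

Lemma oinner_dS_perp (F : R -> R -> oct) t s : D t s -> odiff (F t) s ->
  (forall u, D t u -> oinner (F t u) (Y t u) = 0) ->
  oinner (F t s) (dS Y t s) = - oinner (dS F t s) (Y t s).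
Proof.
  intros Hts HF HFY; rewrite (dS_oinner_const F Y 0 t s Hts HF (HYd t s Hts) HFY); ring.
Qed.

Lemma oinner_dS4_perp t s : D t s ->
  oinner (dS (dS (dS (dS gamma))) t s) (Y t s) =
  k1 gamma t s * kappa2 gamma t s * oinner (dS (I2 gamma) t s) (Y t s).
Proof.
  intros Hts.
  assert (E1 : oinner (I1 gamma t s) (dS Y t s) = 0).
  { rewrite (oinner_dS_perp (I1 gamma) t s Hts (odiff_I1 t s Hts) (HY1 t)), dS_I1_perp
      by exact Hts.
    ring. }
  assert (E4 : oinner (I4 gamma t s) (dS Y t s) = 0).
  { rewrite (oinner_dS_perp (I4 gamma) t s Hts (odiff_I4 t s Hts) (HY4 t)), dS_I4_perp_I1
      by (exact Hts || apply HY1, Hts).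
    ring. }
  assert (E5 : oinner (I5 gamma t s) (dS Y t s) = 0).
  { rewrite (oinner_dS_perp (I5 gamma) t s Hts (odiff_I5 t s Hts) (HY5 t)), dS_I5_perp
      by exact Hts.
    ring. }
  pose proof (oinner_dS_perp (I2 gamma) t s Hts (odiff_I2 t s Hts) (HY2 t)) as E2.
  pose proof (oinner_dS_perp (dS (dS (dS gamma))) t s Hts (odiff_iter_s 3 t s Hts) (dS3_perp t))
    as E3.
  rewrite dS3_eq, dS_I1_eq in E3 by exact Hts.
  revert E3; expand_oinner; rewrite E1, E4, E5, E2; intros E3; lra.
Qed.

Lemma oinner_dT_oppI5_perp t s : D t s ->
  oinner (dT (fun t s => oopp (I5 gamma t s)) t s) (Y t s) =
  - kappa2 gamma t s * (2 * k1 gamma t s * oinner (I7 gamma t s) (Y t s)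
                        + oinner (dS (I2 gamma) t s) (Y t s)).
Proof.
  intros Hts; pose proof (HY1 t s Hts); pose proof (HY2 t s Hts); pose proof (HY4 t s Hts);
    pose proof (HY5 t s Hts); pose proof (HY6 t s Hts).
  frame_facts (frame_at t s Hts).
  rewrite dT_oppI5_eq, dT_dT_eq, Hflow, dT_dS_eq, dT_dS2_eq, dS3_eq, dS_I1_eq, dS2_eq
    by exact Hts.
  change (dS gamma t s) with (I4 gamma t s).
  expand_ocross.
  rewrite (ocross_ocross_same (I4 gamma t s) (dS (dS (dS (dS gamma))) t s))
    by (auto; apply (is_imag_iter 4), Hts).
  expand_oinner; use_inner_values.
  rewrite oinner_dS4_perp by exact Hts.
  field; apply k1_neq0, Hts.
Qed.

End PerpField.

Lemma dT_oppI5_I3 t s : D t s ->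
  oinner (dT (fun t s => oopp (I5 gamma t s)) t s) (I3 gamma t s) = 0.
Proof.
  intros Hts; rewrite (oinner_dT_oppI5_perp (I3 gamma)) by
    (exact Hts || apply odiff_I3 ||
     (intros u v Huv; frame_facts (frame_at u v Huv); assumption)).
  frame_facts (frame_at t s Hts).
  destruct (phi3_eq_0 gamma t s (Hphi3 t s Hts)) as [Halpha _]; unfold alpha in Halpha.
  use_inner_values; ring.
Qed.

Lemma dT_oppI5_I7 t s : D t s ->
  oinner (dT (fun t s => oopp (I5 gamma t s)) t s) (I7 gamma t s) =
  - (3 / 2) * k1 gamma t s * kappa2 gamma t s.
Proof.
  intros Hts; rewrite (oinner_dT_oppI5_perp (I7 gamma)) by
    (exact Hts || apply odiff_I7 ||
     (intros u v Huv; frame_facts (frame_at u v Huv); assumption)).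
  frame_facts (frame_at t s Hts).
  destruct (phi3_eq_0 gamma t s (Hphi3 t s Hts)) as [_ Hbeta].
  rewrite beta2_eq in Hbeta by exact Hts; unfold beta1 in Hbeta.
  replace (oinner (dS (I2 gamma) t s) (I7 gamma t s)) with (- k1 gamma t s / 2) by lra.
  rewrite N77; field.
Qed.

Lemma Etilde_perp a t s : D t s -> (a = 6 \/ a = 7)%nat ->
  oinner (I1 gamma t s) (Etilde gamma a t s) = 0 /\
  oinner (I4 gamma t s) (Etilde gamma a t s) = 0 /\
  oinner (I5 gamma t s) (Etilde gamma a t s) = 0 /\
  oinner (I6 gamma t s) (Etilde gamma a t s) = 0.
Proof.
  intros Hts Ha; frame_facts (frame_at t s Hts).
  destruct Ha as [-> | ->]; cbn [Etilde Eframe]; expand_oinner; use_inner_values;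
    repeat split; ring.
Qed.

Lemma dT_oppI5_Etilde a t s : D t s -> (a = 6 \/ a = 7)%nat ->
  oinner (dT (fun t s => oopp (I5 gamma t s)) t s) (Etilde gamma a t s) = 0.
Proof.
  intros Hts [-> | ->]; cbn [Etilde Eframe]; [apply dT_oppI5_I3, Hts |].
  rewrite oinner_addr, !oinner_scaler, dT_oppI5_I7 by exact Hts.
  unfold theta; cbn [hcoef Eframe].
  rewrite sqrt2_Cmod_phi1, Cmod_phi2 by (apply Hk1 || apply Hk2; exact Hts).
  set (h := oinner (dT (fun t s => oopp (I5 gamma t s)) t s) (I2 gamma t s) / k1 gamma t s).
  replace (oinner (dT (fun t s => oopp (I5 gamma t s)) t s) (I2 gamma t s))
    with (k1 gamma t s * h) by (unfold h; field; apply k1_neq0, Hts).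
  rewrite <- (Rmult_0_r (k1 gamma t s)), <- (acos_rotation_cancel h (kappa2 gamma t s))
    by apply Hk2, Hts.
  ring.
Qed.

Lemma normal_coefficients_vanish t s a i j : D t s -> (a = 6 \/ a = 7)%nat ->
  (i = 1 \/ i = 2)%nat -> (j = 1 \/ j = 2)%nat -> hcoef gamma (Etilde gamma) a i j t s = 0.
Proof.
  intros Hts Ha Hi Hj; destruct (Etilde_perp a t s Hts Ha) as [P1 [P4 [P5 P6]]].
  destruct Hi as [-> | ->], Hj as [-> | ->]; unfold hcoef;
    change (Etilde gamma 1) with (I4 gamma);
    change (Etilde gamma 2) with (fun t s => oopp (I5 gamma t s)).
  - apply dS_I4_perp_I1; assumption.
  - rewrite dT_I4_perp by assumption; apply Rdiv_0_l.
  - apply dS_oppI5_perp; assumption.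
  - rewrite dT_oppI5_Etilde by assumption; apply Rdiv_0_l.
Qed.

End Flow.

Theorem proposition4 (gamma : R -> R -> oct) (ta tb sa sb : Rbar)
  (Hs0 : Rbar_lt sa (Finite 0) /\ Rbar_lt (Finite 0) sb)
  (Hsmooth : forall t s : R, in_rect ta tb sa sb t s -> smooth_at gamma t s)
  (Himag : forall t s : R, in_rect ta tb sa sb t s -> is_imag (gamma t s))
  (Hflow : forall t s : R, in_rect ta tb sa sb t s ->
       dT gamma t s = ocross (dS gamma t s) (dS (dS gamma) t s))
  (Hunit : forall t s : R, in_rect ta tb sa sb t s -> onorm (dS gamma t s) = 1)
  (Hk1 : forall t s : R, in_rect ta tb sa sb t s -> 0 < k1 gamma t s)
  (Hk2 : forall t s : R, in_rect ta tb sa sb t s -> 0 < kappa2 gamma t s)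
  (Hphi3 : forall t s : R, in_rect ta tb sa sb t s -> phi3 gamma t s = RtoC 0)
  (Hphi2 : forall t s : R, in_rect ta tb sa sb t s -> phi2 gamma t s <> RtoC 0) :
  forall t s : R, in_rect ta tb sa sb t s ->
    forall i j : nat, (i = 1 \/ i = 2)%nat -> (j = 1 \/ j = 2)%nat ->
      hcoef gamma (Etilde gamma) 6 i j t s = 0 /\
      hcoef gamma (Etilde gamma) 7 i j t s = 0.
Proof.
  intros t s Hts i j Hi Hj.
  split; apply (normal_coefficients_vanish gamma ta tb sa sb); auto.
Qed.
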